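(* Let $E$ be a nonzero real Banach space, $S\colon E\rightrightarrows E^*$ be closed, monotone and quasidense, and suppose $R(S^{\mathbb F})\subset\widehat E:=\{\widehat x:x\in E\}$. Then $G(S^{\mathbb F})=\{(x^*,\widehat x):(x,x^* )\in G(S)\}$.
   Context: $\widehat x\in E^{**}$ is the canonical image of $x$ ($\langle x^*,\widehat x\rangle=\langle x,x^*\rangle$). For a multifunction $S\colon E\rightrightarrows E^*$ with nonempty graph $G(S)$: closed means $G(S)$ norm-closed; monotone means $\langle s-t,s^*-t^*\rangle\ge0$ on $G(S)$; quasidense means for every $(x,x^* )$, $\inf_{(s,s^* )\in G(S)}[\tfrac12\|s-x\|^2+\tfrac12\|s^*-x^*\|^2+\langle s-x,s^*-x^*\rangle]\le0$. Let $\varphi_S(x,x^* )=\sup_{(s,s^* )\in G(S)}[\langle s,x^*\rangle+\langle x,s^*\rangle-\langle s,s^*\rangle]$ and $\varphi_S^*$ its conjugate on $E^*\times E^{**}$ under $\langle (x,x^* ),(y^*,y^{**})\rangle=\langle x,y^*\rangle+\langle x^*,y^{**}\rangle$. For $S$ closed, monotone, quasidense, the Fitzpatrick extension $S^{\mathbb F}\colon E^*\rightrightarrows E^{**}$ is given by $(y^*,y^{**})\in G(S^{\mathbb F})$ iff $\varphi_S^*(y^*,y^{**})=\langle y^*,y^{**}\rangle$; $R(S^{\mathbb F})$ is its range. *)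

From HB Require Import structures.
From mathcomp Require Import all_boot all_order all_algebra.
From mathcomp Require Import all_classical all_reals all_analysis.
Set Implicit Arguments. Unset Strict Implicit. Unset Printing Implicit Defensive.
Import Order.TTheory GRing.Theory Num.Theory.
Import numFieldNormedType.Exports.
Local Open Scope classical_set_scope.
Local Open Scope ring_scope.

Section Fitzpatrick.
Variables (R : realType) (E : completeNormedModType R).

Definition lin_fun (f : E -> R) :=
  forall (a : R) (x y : E), f (a *: x + y) = a * f x + f y.

Record dual := Dual {
  dual_fun :> E -> R;
  dual_lin : lin_fun dual_fun;
  dual_bnd : exists C : R, forall x : E, `|dual_fun x| <= C * `|x| }.

Definition dnorm (f : E -> R) : R :=
  sup [set `|f x| | x in [set x : E | `|x| <= 1]].

Record bidual := Bidual {
  bidual_fun :> dual -> R;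
  bidual_lin : forall (a : R) (f g h : dual),
      (forall x, h x = a * f x + g x) ->
      bidual_fun h = a * bidual_fun f + bidual_fun g;
  bidual_bnd : exists C : R, forall f : dual, `|bidual_fun f| <= C * dnorm f }.

Definition is_hat (x : E) (ybb : bidual) := forall f : dual, ybb f = f x.

(* A multifunction S : E =>> E^* is given by its graph G(S). *)
Variable G : set (E * dual).

Definition closed_graph :=
  forall (u : nat -> E * dual) (x : E) (xs : dual),
    (forall n, G (u n)) ->
    ((fun n => `|(u n).1 - x| + dnorm (fun z => (u n).2 z - xs z)) @ \oo --> (0:R)) ->
    G (x, xs).

Definition monotone_graph :=
  forall s t, G s -> G t -> 0 <= s.2 (s.1 - t.1) - t.2 (s.1 - t.1).

Definition quasidense_graph :=
  forall (x : E) (xs : dual),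
    (ereal_inf [set ((`|s.1 - x| ^+ 2) / 2
                     + (dnorm (fun z => s.2 z - xs z) ^+ 2) / 2
                     + (s.2 (s.1 - x) - xs (s.1 - x)))%:E | s in G] <= 0)%E.

Definition phiS (x : E) (xs : dual) : \bar R :=
  ereal_sup [set (xs s.1 + s.2 x - s.2 s.1)%:E | s in G].

Definition phiS_star (ys : dual) (ybb : bidual) : \bar R :=
  ereal_sup [set ((ys p.1 + ybb p.2)%:E - phiS p.1 p.2)%E | p in [set: E * dual]].

Definition graph_SF : set (dual * bidual) :=
  [set p | phiS_star p.1 p.2 = (p.2 p.1)%:E].

End Fitzpatrick.

From HB Require Import structures.
From mathcomp Require Import all_boot all_order all_algebra.
From mathcomp Require Import all_classical all_reals all_analysis.
From mathcomp Require Import lra.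
Import Order.TTheory GRing.Theory Num.Theory.
Import numFieldNormedType.Exports.
Local Open Scope classical_set_scope.
Local Open Scope ring_scope.

(* If (ys, \hat x) is in G(S^F), testing phi_S^*(ys, \hat x) = <x, ys> at
   the points of G(S), where phi_S is the duality pairing, shows that (x, ys)
   is monotonically related to G(S): <s - x, s^* - ys> >= 0.  That term is
   the last summand of the quasidensity infimum, so quasidensity yields
   points of G(S) arbitrarily close to (x, ys), and closedness puts (x, ys)
   in G(S).  Conversely, for (x, ys) in G(S) the pair (x, ys) itself gives
   phi_S(p) >= <p.1, ys> + <x, p.2> - <x, ys>, so phi_S^*(ys, \hat x) is at
   most <x, ys>, with equality at p = (x, ys). *)

Lemma sum_lt_of_sqr_sum_lt (R : realFieldType) (a b e : R) :
  0 <= a -> 0 <= b -> 0 < e -> a ^+ 2 / 2 + b ^+ 2 / 2 < e ^+ 2 / 4 -> a + b < e.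
Proof.
move=> a0 b0 e0; rewrite !expr2 => h.
have h2 : (a + b) * (a + b) < e * e by have := sqr_ge0 (a - b); rewrite expr2; nra.
nra.
Qed.

Section Fitzpatrick.
Context {R : realType} {E : completeNormedModType R}.

Lemma dual_fun0 (f : dual E) : f 0 = 0.
Proof. by have := dual_lin f 1 0 0; rewrite scale1r addr0 mul1r; lra. Qed.

Lemma dual_funB (f : dual E) (x y : E) : f (x - y) = f x - f y.
Proof.
have fN := dual_lin f (-1) y 0.
rewrite addr0 dual_fun0 addr0 scaleN1r mulN1r in fN.
by have := dual_lin f 1 x (- y); rewrite scale1r mul1r fN.
Qed.

Lemma dnorm_ge0 (f : E -> R) : 0 <= dnorm f.
Proof.
rewrite /dnorm; set S := [set `|f x| | x in _].
have [[_ ubS]|/sup_out -> //] := pselect (has_sup S).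
apply: le_trans (normr_ge0 (f 0)) _; apply: ub_le_sup => //.
by exists 0 => //=; rewrite normr0.
Qed.

Context {G : set (E * dual E)}.

Lemma phiS_ge (p : E * dual E) {x : E} {xs : dual E} : G (x, xs) ->
  ((xs p.1 + p.2 x - xs x)%:E <= phiS G p.1 p.2)%E.
Proof.
by move=> Gx; apply: ereal_sup_ubound; exists (x, xs); rewrite //= (addrC (p.2 x)).
Qed.

Lemma phiS_graph {s : E * dual E} : monotone_graph G -> G s ->
  phiS G s.1 s.2 = (s.2 s.1)%:E.
Proof.
case: s => x xs Hmon Gx; apply/le_anti/andP; split.
  apply/ereal_supP => _ [t Gt <-]; rewrite lee_fin.
  by have := Hmon _ t Gx Gt; rewrite !dual_funB /=; lra.
by have := phiS_ge (x, xs) Gx; rewrite /= addrK.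
Qed.

Lemma phiS_star_le_hat {x : E} {ys : dual E} {ybb : bidual E} :
  G (x, ys) -> is_hat x ybb -> (phiS_star G ys ybb <= (ys x)%:E)%E.
Proof.
move=> Gx hx; apply/ereal_supP => _ [p _ <-]; rewrite hx.
have := phiS_ge p Gx.
case: (phiS G p.1 p.2) => [r| |] //=; rewrite ?lee_fin; first lra.
by rewrite leNye.
Qed.

Lemma graph_SF_hat {x : E} {ys : dual E} {ybb : bidual E} :
  monotone_graph G -> G (x, ys) -> is_hat x ybb -> graph_SF G (ys, ybb).
Proof.
move=> Hmon Gx hx; rewrite /graph_SF /= hx.
apply/le_anti; rewrite phiS_star_le_hat //=.
apply: ereal_sup_ubound; exists (x, ys) => //=.
by rewrite hx (phiS_graph Hmon Gx) -EFinB addrK.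
Qed.

Lemma graph_SF_monotone_related {x : E} {ys : dual E} {ybb : bidual E} :
  monotone_graph G -> graph_SF G (ys, ybb) -> is_hat x ybb ->
  forall s, G s -> 0 <= s.2 (s.1 - x) - ys (s.1 - x).
Proof.
rewrite /graph_SF /= => Hmon hSF hx s Gs.
have : ((ys s.1 + ybb s.2)%:E - phiS G s.1 s.2 <= phiS_star G ys ybb)%E.
  by apply: ereal_sup_ubound; exists s.
by rewrite hSF (phiS_graph Hmon Gs) !hx -EFinB lee_fin !dual_funB; lra.
Qed.

Lemma quasidense_approx {x : E} {xs : dual E} :
  quasidense_graph G ->
  (forall s, G s -> 0 <= s.2 (s.1 - x) - xs (s.1 - x)) ->
  forall e : R, 0 < e ->
  exists2 s, G s & `|s.1 - x| + dnorm (fun z => s.2 z - xs z) < e.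
Proof.
move=> Hqd Hrel e e0.
have e2 : (0 < (e ^+ 2 / 4)%:E)%E by rewrite lte_fin divr_gt0 ?exprn_gt0.
have [_ [s Gs <-]] := ereal_inf_lt (le_lt_trans (Hqd x xs) e2).
rewrite lte_fin => hs; exists s => //.
have rel_s := Hrel s Gs.
by apply: sum_lt_of_sqr_sum_lt => //; [exact: dnorm_ge0 | lra].
Qed.

Lemma closed_graph_approx {x : E} {xs : dual E} :
  closed_graph G ->
  (forall e : R, 0 < e ->
    exists2 s, G s & `|s.1 - x| + dnorm (fun z => s.2 z - xs z) < e) ->
  G (x, xs).
Proof.
move=> Hcl happrox.
have approx_n (n : nat) : exists s, G s /\
    `|s.1 - x| + dnorm (fun z => s.2 z - xs z) < harmonic n.
  by have [s Gs hs] := happrox _ (harmonic_gt0 n); exists s.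
have [u Gu] := choice approx_n.
apply: (Hcl u) => [n|]; first by case: (Gu n).
apply: (squeeze_cvgr (f := cst 0) (h := harmonic)); last exact: cvg_harmonic.
- apply: nearW => n; have [_ /ltW ->] := Gu n.
  by rewrite addr_ge0 ?dnorm_ge0.
- exact: cvg_cst.
Qed.

End Fitzpatrick.

Theorem lemma3p2 (R : realType) (E : completeNormedModType R)
  (G : set (E * dual E))
  (HE : exists x : E, x != 0)
  (HG : G !=set0)
  (Hcl : closed_graph G) (Hmon : monotone_graph G) (Hqd : quasidense_graph G)
  (Hrange : forall p, graph_SF G p -> exists x : E, is_hat x p.2) :
  forall (ys : dual E) (ybb : bidual E),
    graph_SF G (ys, ybb) <-> exists x : E, G (x, ys) /\ is_hat x ybb.
Proof.
move=> ys ybb; split=> [hSF | [x [Gx hx]]]; last exact: graph_SF_hat Hmon Gx hx.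
have [x hx] := Hrange _ hSF; exists x; split => //.
apply: closed_graph_approx Hcl _; apply: quasidense_approx Hqd _.
exact: graph_SF_monotone_related Hmon hSF hx.
Qed.
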